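(* Let $n,k,\bar k,\bar m$ be integers with $\bar k\ge2$, $\bar m\ge 2$, $\bar m\binom{\bar k}{2}=\binom{k}{2}$ and $\bar m\bar k\le n$. Let $A$ be a network (of the type below) on $\{1,\dots,n\}$ consisting of $\bar m$ pairwise disjoint mini fully connected networks each on $\bar k$ nodes (all pairs within each block linked, no other links), the remaining $n-\bar m\bar k$ nodes isolated; and let $B$ be a network consisting of one mini fully connected network on $k$ nodes and $n-k$ isolated nodes. Then (both networks have the same number of links and) $$\sum_{i=1}^n\Delta_i(A)\le\sum_{i=1}^n\Delta_i(B).$$
   Context: Version-age model. A gossip network on a finite node set $\mathcal N$ is specified by source rates $\lambda_{0j}>0$ and gossip rates $\lambda_{ij}\ge 0$ ($i\neq j$; rate at which $i$ sends to $j$); $\lambda_s>0$ is the source's update rate. For nonempty $S\subseteq\mathcal N$ let $N(S)=\{i\in\mathcal N\setminus S:\ \sum_{j\in S}\lambda_{ij}>0\}$ and define $$\Delta_S=\frac{\lambda_s+\sum_{i\in N(S)}\big(\sum_{j\in S}\lambda_{ij}\big)\Delta_{S\cup\{i\}}}{\sum_{j\in S}\lambda_{0j}+\sum_{i\in N(S)}\sum_{j\in S}\lambda_{ij}}$$ (well defined by downward induction on $|S|$); $\Delta_i=\Delta_{\{i\}}$, and $\Delta_i(G)$ denotes this quantity in network $G$. Networks with uniform link rate: node set $\{1,\dots,n\}$, $\lambda_{0j}=\lambda/n$ for all $j$, and a set of links (unordered pairs of distinct nodes); for each link $\{a,b\}$, $\lambda_{ab}=\lambda_{ba}=\lambda/n$,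 and $\lambda_{ab}=0$ otherwise. A node with no links is isolated. *)

From mathcomp Require Import all_boot all_order all_algebra.
Set Implicit Arguments. Unset Strict Implicit. Unset Printing Implicit Defensive.
Import Order.TTheory GRing.Theory Num.Theory.
Local Open Scope ring_scope.

Section VersionAge.
Variables (R : realFieldType) (n : nat).
(* A general gossip network on nodes 'I_n (node i+1 of the paper is i).
   lam0 j = lambda_{0j}, lam i j = lambda_{ij}, lams = lambda_s. *)
Variables (lam0 : 'I_n -> R) (lam : 'I_n -> 'I_n -> R) (lams : R).

Definition Nbhd (S : {set 'I_n}) : {set 'I_n} :=
  [set i | (i \notin S) && (0 < \sum_(j in S) lam i j)].

(* Downward recursion on |S|, implemented with fuel; fuel n - |S| + 1 suffices
   since every recursive call adds a new element to S. *)
Fixpoint Delta_fuel (fuel : nat) (S : {set 'I_n}) : R :=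
  match fuel with
  | 0%N => 0
  | f.+1 =>
      (lams + \sum_(i in Nbhd S) (\sum_(j in S) lam i j) * Delta_fuel f (i |: S))
      / (\sum_(j in S) lam0 j + \sum_(i in Nbhd S) \sum_(j in S) lam i j)
  end.

Definition DeltaS (S : {set 'I_n}) : R := Delta_fuel (n - #|S|).+1 S.

Definition Delta_node (i : 'I_n) : R := DeltaS [set i].
End VersionAge.

Definition unif_lam0 (R : realFieldType) (n : nat) (lambda : R) : 'I_n -> R :=
  fun _ => lambda / n%:R.
Definition unif_lam (R : realFieldType) (n : nat) (lambda : R) (e : rel 'I_n)
  : 'I_n -> 'I_n -> R :=
  fun i j => if e i j then lambda / n%:R else 0.

Definition Delta_unif (R : realFieldType) (n : nat) (lambda lams : R)
  (e : rel 'I_n) (i : 'I_n) : R :=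
  @Delta_node R n (@unif_lam0 R n lambda) (@unif_lam R n lambda e) lams i.

From mathcomp Require Import all_boot all_order all_algebra.
From mathcomp Require Import ring lra zify.
Set Implicit Arguments. Unset Strict Implicit. Unset Printing Implicit Defensive.
Import Order.TTheory GRing.Theory Num.Theory.
Local Open Scope ring_scope.

(* 1. Closed form on a clique.  If Q is a set of nodes that receive from the
      source at rate c and form a complete component with link rate c, then
      for S ⊆ Q with |S| = s >= 1 the recursion for Delta_S gives
         (|Q| - s + 1) Delta_S = (lams / c) (H_|Q| - H_(s-1)),
      by downward induction on s; in particular Delta_i = (lams/c) H_q / q
      for i in a q-clique, and Delta_i = lams / c for an isolated node.
   2. Summing over a network made of m disjoint q-cliques (the other nodes
      isolated) gives  sum_i Delta_i = (lams / c) (n - m q + m H_q).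
   3. The theorem reduces to  k - H_k <= m (kbar - H_kbar).  Writing
      f(b) = b - H_b, the ratio f(b) / C(b,2) is nonincreasing for b >= 2,
      and m C(kbar,2) = C(k,2) then gives f(k) <= m f(kbar). *)

Definition harmonic (R : realFieldType) (t : nat) : R := \sum_(j < t) (j.+1%:R)^-1.

Lemma harmonicS (R : realFieldType) (t : nat) :
  harmonic R t.+1 = harmonic R t + (t.+1%:R)^-1.
Proof. by rewrite /harmonic big_ord_recr. Qed.

Lemma harmonic0 (R : realFieldType) : harmonic R 0 = 0.
Proof. exact: big_ord0. Qed.

Lemma harmonic1 (R : realFieldType) : harmonic R 1 = 1.
Proof. by rewrite harmonicS harmonic0 add0r invr1. Qed.

Lemma sum_indicator (R : realFieldType) (T : finType) (A : {set T}) (x y : R) :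
  \sum_(i : T) (if i \in A then x else y) = #|A|%:R * x + (#|T|%:R - #|A|%:R) * y.
Proof.
have cardNA : (#|A| + #|(fun i : T => i \notin A)|)%N = #|T|.
  by rewrite -(cardC A); congr (_ + _)%N; apply: eq_card.
rewrite (bigID (mem A)) /= (eq_bigr (fun _ => x)) => [|i -> //].
rewrite [X in _ + X](eq_bigr (fun _ => y)) => [|i /negbTE -> //].
by rewrite !sumr_const -cardNA natrD addrAC subrr add0r !mulr_natl.
Qed.

Section CliqueAge.
Variables (R : realFieldType) (n : nat) (lam0 : 'I_n -> R)
  (lam : 'I_n -> 'I_n -> R) (lams c : R) (Q : {set 'I_n}).
Hypothesis c_gt0 : 0 < c.
Hypothesis lam0_Q : forall j, j \in Q -> lam0 j = c.
Hypothesis lam_Q : forall i j, j \in Q -> lam i j = if (i \in Q) && (i != j) then c else 0.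

Lemma rate_into (S : {set 'I_n}) (i : 'I_n) : S \subset Q -> i \notin S ->
  \sum_(j in S) lam i j = if i \in Q then c * #|S|%:R else 0.
Proof.
move=> sSQ iNS.
have lam_S j : j \in S -> lam i j = if i \in Q then c else 0.
  move=> jS; have ij : i != j by apply: contraNneq iNS => ->.
  by rewrite (lam_Q i (subsetP sSQ j jS)) ij andbT.
rewrite (eq_bigr _ lam_S) sumr_const.
by case: (i \in Q); rewrite ?mul0rn // mulr_natr.
Qed.

Lemma Nbhd_clique (S : {set 'I_n}) : S \subset Q -> (0 < #|S|)%N ->
  Nbhd lam S = Q :\: S.
Proof.
move=> sSQ S_gt0; apply/setP => i; rewrite !inE.
case iS: (i \in S) => //=; rewrite rate_into ?iS //.
by case: (i \in Q); rewrite ?ltxx // mulr_gt0 // ltr0n.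
Qed.

Lemma Delta_clique_step (f : nat) (S : {set 'I_n}) : S \subset Q -> (0 < #|S|)%N ->
  Delta_fuel lam0 lam lams f.+1 S
  = (lams + c * #|S|%:R * \sum_(i in Q :\: S) Delta_fuel lam0 lam lams f (i |: S))
    / (c * #|S|%:R * (#|Q :\: S|.+1)%:R).
Proof.
move=> sSQ S_gt0; rewrite /= Nbhd_clique //.
have rate_QS i : i \in Q :\: S -> \sum_(j in S) lam i j = c * #|S|%:R.
  by rewrite inE => /andP [iNS iQ]; rewrite rate_into // iQ.
have src : \sum_(j in S) lam0 j = c * #|S|%:R.
  by rewrite (eq_bigr _ (fun j jS => lam0_Q (subsetP sSQ j jS))) sumr_const mulr_natr.
have gossip : \sum_(i in Q :\: S) \sum_(j in S) lam i j = c * #|S|%:R * #|Q :\: S|%:R.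
  by rewrite (eq_bigr _ rate_QS) sumr_const [RHS]mulr_natr.
rewrite src gossip mulr_sumr -natr1 mulrDr mulr1 [X in _ / X]addrC.
by congr ((_ + _) / _); apply: eq_bigr => i /rate_QS ->.
Qed.

Lemma Delta_clique (d t : nat) (S : {set 'I_n}) :
  S \subset Q -> #|S| = t.+1 -> #|Q| = (t.+1 + d)%N ->
  (d.+1)%:R * Delta_fuel lam0 lam lams (n - t.+1).+1 S
  = lams / c * (harmonic R (t.+1 + d) - harmonic R t).
Proof.
have c_neq0 : c != 0 by rewrite gt_eqF.
have pos_neq0 (x : R) (m : nat) : 0 < x -> x + m%:R != 0.
  by move=> x_gt0; rewrite lt0r_neq0 // ltr_wpDr.
elim: d t S => [|d IH] t S sSQ cardS cardQ.
  have QS0 : Q :\: S = set0.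
    have -> : S = Q by apply/eqP; rewrite eqEcard sSQ cardS cardQ addn0 leqnn.
    exact: setDv.
  rewrite Delta_clique_step ?cardS // QS0 big_set0 cards0 mulr0 addr0 addn0 harmonicS.
  by field; rewrite c_neq0 pos_neq0.
have QS_card : #|Q :\: S| = d.+1 by rewrite cardsD (setIidPr sSQ) cardQ cardS addKn.
have fuel : (n - t.+1 = (n - t.+2).+1)%N.
  have := max_card (mem Q); rewrite card_ord cardQ; lia.
have next i : i \in Q :\: S -> Delta_fuel lam0 lam lams (n - t.+2).+1 (i |: S)
    = lams / c * (harmonic R (t.+2 + d) - harmonic R t.+1) / d.+1%:R.
  rewrite inE => /andP [iNS iQ].
  have iS_sub : i |: S \subset Q by rewrite subUset sub1set iQ.
  have iS_card : #|i |: S| = t.+2 by rewrite cardsU1 iNS cardS.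
  have Q_card : #|Q| = (t.+2 + d)%N by rewrite cardQ addnS.
  rewrite -(IH t.+1 (i |: S) iS_sub iS_card Q_card) mulrC mulKf //.
  by rewrite pnatr_eq0.
rewrite fuel Delta_clique_step ?cardS // (eq_bigr _ next) sumr_const QS_card.
rewrite -addSnnS harmonicS.
by field; rewrite c_neq0 !pos_neq0 ?ltr0n.
Qed.

Lemma Delta_node_clique (i : 'I_n) : i \in Q ->
  Delta_node lam0 lam lams i = lams / c * harmonic R #|Q| / #|Q|%:R.
Proof.
move=> iQ; have Q_gt0 : (0 < #|Q|)%N by apply/card_gt0P; exists i.
have cardQ : #|Q| = (1 + #|Q|.-1)%N by rewrite add1n prednK.
have := @Delta_clique #|Q|.-1 0 [set i]; rewrite sub1set cards1 -cardQ => /(_ iQ erefl erefl).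
rewrite harmonic0 subr0 prednK // => <-.
by rewrite /Delta_node /DeltaS cards1 mulrC mulKf // pnatr_eq0 -lt0n.
Qed.
End CliqueAge.

Section UniformCliques.
Variables (R : realFieldType) (n : nat) (lambda lams : R).
Hypothesis n_gt0 : (0 < n)%N.
Hypothesis lambda_gt0 : 0 < lambda.

Let c_gt0 : 0 < lambda / n%:R.
Proof. by rewrite divr_gt0 // ltr0n. Qed.

Lemma Delta_unif_clique (e : rel 'I_n) (Q : {set 'I_n}) (i : 'I_n) : i \in Q ->
  (forall i' j, j \in Q -> e i' j = (i' \in Q) && (i' != j)) ->
  Delta_unif lambda lams e i = lams / (lambda / n%:R) * harmonic R #|Q| / #|Q|%:R.
Proof.
move=> iQ eQ; apply: Delta_node_clique => // i' j jQ.
by rewrite /unif_lam eQ.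
Qed.

(* An isolated node is a clique of size one. *)
Lemma Delta_unif_isolated (e : rel 'I_n) (i : 'I_n) : (forall i', e i' i = false) ->
  Delta_unif lambda lams e i = lams / (lambda / n%:R).
Proof.
move=> iso; rewrite (@Delta_unif_clique _ [set i]) ?set11 ?cards1 ?harmonic1 ?divr1 ?mulr1 //.
by move=> i' j; rewrite inE => /eqP ->; rewrite iso inE andbN.
Qed.

Variables (I : finType) (P : I -> {set 'I_n}) (q : nat).
Hypothesis P_card : forall b, #|P b| = q.
Hypothesis P_disj : forall b b', b != b' -> [disjoint P b & P b'].
Variable e : rel 'I_n.
Hypothesis e_blocks :
  forall i j, e i j = (i != j) && [exists b, (i \in P b) && (j \in P b)].

Lemma mem_blocks (b b' : I) (j : 'I_n) : j \in P b -> (j \in P b') = (b' == b).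
Proof.
move=> jb; case: eqP => [-> //|/eqP neq].
exact: disjointFl (P_disj neq) jb.
Qed.

Lemma Delta_unif_blocks (i : 'I_n) : Delta_unif lambda lams e i =
  if i \in \bigcup_b P b then lams / (lambda / n%:R) * harmonic R q / q%:R
  else lams / (lambda / n%:R).
Proof.
case: bigcupP => [[b _ ib]|iN].
  rewrite (@Delta_unif_clique _ (P b)) ?P_card // => i' j jb.
  rewrite e_blocks andbC; congr (_ && _); apply/existsP/idP => [[b']|i'b].
    by rewrite (mem_blocks _ jb) andbC => /andP [/eqP <-].
  by exists b; rewrite i'b jb.
apply: Delta_unif_isolated => i'; rewrite e_blocks.
by case: existsP => [[b /andP [_ ib]]|]; [case: iN; exists b | rewrite andbF].
Qed.

Lemma card_blocks : #|\bigcup_b P b| = (#|I| * q)%N.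
Proof.
rewrite -sum1_card (partition_disjoint_bigcup addn (fun _ => 1%N) P_disj).
under eq_bigr => b _ do rewrite sum1_card P_card.
by rewrite sum_nat_const mulnC.
Qed.

Lemma sum_Delta_blocks : (0 < q)%N ->
  \sum_(i < n) Delta_unif lambda lams e i
  = lams / (lambda / n%:R) * (n%:R - (#|I| * q)%:R + #|I|%:R * harmonic R q).
Proof.
move=> q_gt0; under eq_bigr => i _ do rewrite Delta_unif_blocks.
rewrite sum_indicator card_blocks card_ord natrM.
by field; rewrite !pnatr_eq0 -!lt0n n_gt0 q_gt0 gt_eqF.
Qed.
End UniformCliques.

Section Excess.
Variable R : realFieldType.

Definition excess (b : nat) : R := b%:R - harmonic R b.

(* Adding node b+1 raises the excess by 1 - 1/(b+1) = b/(b+1). *)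
Lemma excessS (b : nat) : excess b.+1 = excess b + b%:R / b.+1%:R.
Proof.
rewrite /excess harmonicS -natr1.
by field; rewrite natr1 pnatr_eq0.
Qed.

Lemma excess_increment (b : nat) : let y : R := b%:R / b.+1%:R in
  y * (b%:R + 1) = b%:R /\ 0 <= y <= 1.
Proof.
have b1_gt0 : (0 : R) < b.+1%:R by rewrite ltr0n.
rewrite /= natr1 mulfVK ?gt_eqF // divr_ge0 ?ler0n //=.
by rewrite ler_pdivrMr // mul1r ler_nat.
Qed.

Lemma excess_ge0 (b : nat) : 0 <= excess b.
Proof.
elim: b => [|b IH]; first by rewrite /excess harmonic0 subr0.
by rewrite excessS addr_ge0 // divr_ge0 ?ler0n.
Qed.

Lemma binom_le_excess (b : nat) : 'C(b, 2)%:R <= b.+1%:R * excess b.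
Proof.
elim: b => [|b IH]; first by rewrite bin0n mul1r; exact: excess_ge0.
have := excess_increment b; set y := _ / _ => -[incr /andP [y_ge0 y_le1]].
have f_ge0 := excess_ge0 b.
rewrite binS bin1 natrD excessS -/y -!natr1 in IH *; nra.
Qed.

Lemma excess_binom_step (b : nat) :
  excess b.+1 * 'C(b, 2)%:R <= excess b * 'C(b.+1, 2)%:R.
Proof.
have := excess_increment b; set y := _ / _ => -[incr /andP [y_ge0 y_le1]].
have lowb := binom_le_excess b; have f_ge0 := excess_ge0 b.
have C_ge0 : (0 : R) <= 'C(b, 2)%:R by rewrite ler0n.
rewrite binS bin1 natrD excessS -/y -natr1 in lowb *; nra.
Qed.

Lemma excess_binom_mono (a b : nat) : (2 <= a)%N -> (a <= b)%N ->
  excess b * 'C(a, 2)%:R <= excess a * 'C(b, 2)%:R.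
Proof.
move=> a_ge2 /subnKC <-; elim: (b - a)%N => [|d IH]; first by rewrite addn0.
have C_gt0 (m : nat) : (2 <= m)%N -> (0 : R) < 'C(m, 2)%:R by move=> ?; rewrite ltr0n bin_gt0.
have Cd_gt0 := C_gt0 (a + d)%N (leq_trans a_ge2 (leq_addr _ _)).
rewrite addnS -(ler_pM2r Cd_gt0) mulrAC.
apply: (le_trans (y := excess (a + d) * 'C((a + d).+1, 2)%:R * 'C(a, 2)%:R)).
  by apply: ler_wpM2r; rewrite ?ler0n ?excess_binom_step.
rewrite mulrAC [X in _ <= X]mulrAC.
by apply: ler_wpM2r; rewrite ?ler0n.
Qed.

Lemma excess_split (m a b : nat) : (2 <= a)%N -> (0 < m)%N ->
  (m * 'C(a, 2) = 'C(b, 2))%N -> excess b <= m%:R * excess a.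
Proof.
move=> a_ge2 m_gt0 splitC.
have Ca_gt0 : (0 < 'C(a, 2))%N by rewrite bin_gt0.
have a_le_b : (a <= b)%N.
  rewrite leqNgt; apply/negP => b_lt_a.
  have := leq_bin2l 2 b_lt_a; rewrite binS bin1 -{1}splitC => le_Ca.
  have b0 : b = 0%N by nia.
  by move: splitC; rewrite b0 bin0n /=; nia.
have := excess_binom_mono a_ge2 a_le_b.
by rewrite -splitC natrM mulrCA mulrA ler_pM2r ?ltr0n.
Qed.
End Excess.

(* Both networks are disjoint unions of equal cliques (B with a single block),
   so by sum_Delta_blocks the claim reduces to f(k) <= mbar f(kbar). *)
Theorem mainTheorem12 (R : realFieldType) (lambda lams : R)
  (n k kbar mbar : nat)
  (hlam : 0 < lambda) (hlams : 0 < lams)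
  (hkbar : (2 <= kbar)%N) (hmbar : (2 <= mbar)%N)
  (hbin : (mbar * 'C(kbar, 2) = 'C(k, 2))%N)
  (hn : (mbar * kbar <= n)%N)
  (P : 'I_mbar -> {set 'I_n})
  (hPcard : forall b, #|P b| = kbar)
  (hPdisj : forall b b', b != b' -> [disjoint P b & P b'])
  (eA : rel 'I_n)
  (heA : forall i j, eA i j = (i != j) && [exists b, (i \in P b) && (j \in P b)])
  (C : {set 'I_n}) (hC : #|C| = k)
  (eB : rel 'I_n)
  (heB : forall i j, eB i j = [&& i != j, i \in C & j \in C]) :
  \sum_(i < n) Delta_unif lambda lams eA i <= \sum_(i < n) Delta_unif lambda lams eB i.
Proof.
have n_gt0 : (0 < n)%N by apply: leq_trans hn; nia.
have k_gt0 : (0 < k)%N.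
  have Ckbar_gt0 : (0 < 'C(kbar, 2))%N by rewrite bin_gt0.
  by rewrite lt0n; apply/eqP => k0; move: hbin; rewrite k0 bin0n /=; nia.
(* The network B is a single block of size k. *)
have heB1 i j : eB i j = (i != j) && [exists b : unit, (i \in C) && (j \in C)].
  by rewrite heB; congr (_ && _); apply/idP/existsP => [ijC|[]] //; exists tt.
rewrite (sum_Delta_blocks lams n_gt0 hlam hPcard hPdisj heA) ?(leq_trans _ hkbar) //.
have disjB (b b' : unit) : b != b' -> [disjoint C & C] by case: b b' => [] [].
rewrite (sum_Delta_blocks lams n_gt0 hlam (fun _ : unit => hC) disjB heB1 k_gt0).
rewrite ler_pM2l ?divr_gt0 ?ltr0n // card_ord card_unit mul1n !natrM.
have := excess_split R hkbar (ltnW hmbar) hbin; rewrite /excess; lra.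
Qed.
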